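(* Let $\mathbf{A}=(\mathcal{P},\mathcal{L},\parallel)$ and $\mathbf{A}'=(\mathcal{P}',\mathcal{L}',\parallel')$ be affine spaces with $\dim\mathbf{A}'\ge 3$, and let $\varphi:\mathcal{L}\to\mathcal{L}'$ be a bijection satisfying $a\sim b\implies a^\varphi\sim' b^\varphi$ for all $a,b\in\mathcal{L}$. Let $\lambda:\mathcal{P}\to\mathcal{P}'$ be the (well-defined) map $a\cap b\mapsto a^\varphi\cap b^\varphi$ for adjacent $a,b\in\mathcal{L}$. Then $\dim\mathbf{A}\ge 3$. If moreover the order of $\mathbf{A}$ is not two, then for every $Q\in\mathcal{P}$ the restriction $$\varphi|_{\mathcal{L}(Q)}:\mathcal{L}(Q)\to\mathcal{L}'(Q^\lambda)$$ is a semicollineation of the projective space $\mathbf{A}/Q$ onto the projective space $\mathbf{A}'/Q^\lambda$.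
   Context: An affine space $\mathbf{A}=(\mathcal{P},\mathcal{L},\parallel)$ has point set $\mathcal{P}$, line set $\mathcal{L}$ and parallelism $\parallel$; its order is the number of points on a line. Lines $a,b$ are related, $a\sim b$, if $a\cap b\ne\emptyset$; adjacent, $a\approx b$, if related and distinct; analogously $\sim'$ in $\mathbf{A}'$. $\mathcal{L}(Q)$ is the set of lines through the point $Q$. For a plane $\mathcal{E}$ containing $Q$, $\mathcal{L}(Q,\mathcal{E})$ is the pencil of lines in $\mathcal{E}$ through $Q$. The projective space $\mathbf{A}/Q$ has point set $\mathcal{L}(Q)$ and line set $\{\mathcal{L}(Q,\mathcal{E}) : \mathcal{E}\text{ a plane with } Q\in\mathcal{E}\}$; similarly $\mathbf{A}'/Q'$. A semicollineation of projective spaces is a bijection between their point sets taking any three collinear points to collinear points. *)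

Record affine_space := AffineSpace {
  pt : Type;
  ln : Type;
  inc : pt -> ln -> Prop;
  par : ln -> ln -> Prop;
  ax_line_ext : forall l m, (forall p, inc p l <-> inc p m) -> l = m;
  ax_line_two : forall l, exists p q, p <> q /\ inc p l /\ inc q l;
  ax_join : forall p q, p <> q -> exists l, inc p l /\ inc q l;
  ax_join_uniq : forall p q l m, p <> q ->
      inc p l -> inc q l -> inc p m -> inc q m -> l = m;
  ax_par_refl : forall l, par l l;
  ax_par_sym : forall l m, par l m -> par m l;
  ax_par_trans : forall l m n, par l m -> par m n -> par l n;
  ax_euclid : forall p l, exists m, inc p m /\ par m l;
  ax_euclid_uniq : forall p l m1 m2,
      inc p m1 -> par m1 l -> inc p m2 -> par m2 l -> m1 = m2;
  ax_triangle : forall a b c a' b' lab lac lbc la'b' m1 m2,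
      ~ (exists l, inc a l /\ inc b l /\ inc c l) ->
      inc a lab -> inc b lab -> inc a lac -> inc c lac ->
      inc b lbc -> inc c lbc ->
      a' <> b' -> inc a' la'b' -> inc b' la'b' -> par la'b' lab ->
      inc a' m1 -> par m1 lac -> inc b' m2 -> par m2 lbc ->
      exists p, inc p m1 /\ inc p m2;
  ax_three : exists a b c, ~ (exists l, inc a l /\ inc b l /\ inc c l)
}.

Arguments inc {A} p l : rename.
Arguments par {A} l m : rename.

Section AffineNotions.
Variable A : affine_space.

Definition noncollinear (a b c : pt A) : Prop :=
  ~ (exists l : ln A, inc a l /\ inc b l /\ inc c l).

Definition related (a b : ln A) : Prop := exists p : pt A, inc p a /\ inc p b.

Definition adjacent (a b : ln A) : Prop := related a b /\ a <> b.

Definition line_in (S : pt A -> Prop) (l : ln A) : Prop :=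
  forall p, inc p l -> S p.

Definition subspace (S : pt A -> Prop) : Prop :=
  (forall p q l, p <> q -> S p -> S q -> inc p l -> inc q l -> line_in S l) /\
  (forall l m p, line_in S l -> S p -> inc p m -> par m l -> line_in S m).

Definition in_span (X : pt A -> Prop) (p : pt A) : Prop :=
  forall S, subspace S -> (forall x, X x -> S x) -> S p.

Definition triple (a b c : pt A) : pt A -> Prop :=
  fun x => x = a \/ x = b \/ x = c.

Definition plane (E : pt A -> Prop) : Prop :=
  exists a b c, noncollinear a b c /\
    forall p, E p <-> in_span (triple a b c) p.

Definition dim_ge3 : Prop :=
  exists a b c d, noncollinear a b c /\ ~ in_span (triple a b c) d.

Definition order_two : Prop :=
  forall l : ln A, exists p q, p <> q /\ inc p l /\ inc q l /\
    forall r, inc r l -> r = p \/ r = q.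

(* collinearity of three points (lines through Q) in A/Q:
   they belong to a common pencil L(Q, E) for a plane E through Q *)
Definition collinear_at (Q : pt A) (a b c : ln A) : Prop :=
  exists E, plane E /\ E Q /\ line_in E a /\ line_in E b /\ line_in E c.

End AffineNotions.

Arguments noncollinear {A} a b c.
Arguments related {A} a b.
Arguments adjacent {A} a b.
Arguments collinear_at {A} Q a b c.

Definition semicollineation_at (A A' : affine_space) (f : ln A -> ln A')
    (Q : pt A) (Q' : pt A') : Prop :=
  (forall l, inc Q l -> inc Q' (f l)) /\
  (forall l m, inc Q l -> inc Q m -> f l = f m -> l = m) /\
  (forall l', inc Q' l' -> exists l, inc Q l /\ f l = l') /\
  (forall a b c, inc Q a -> inc Q b -> inc Q c ->
     collinear_at Q a b c -> collinear_at Q' (f a) (f b) (f c)).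

From Stdlib Require Import Classical.

(* The only nontrivial geometry of A that is needed is that in a plane disjoint
   lines are parallel.  We prove it by sweeping the plane spanned by x, y, z with the
   parallels to d = xy through the points of l0 = xz: the swept points form a subspace
   (hence contain the span), and inside it two disjoint lines are parallel.
   - dim A >= 3: if A were a plane, the preimages of three parallel lines of A' without
     a common transversal would be pairwise parallel, hence have a transversal, whose
     image would be a transversal in A'.
   - Semicollineation at Q: lam maps each line into its image and is injective (it
     would be constant otherwise); so phi maps the pencil of Q onto that of lam Q.  If
     lines have at least three points, three coplanar lines through Q admit a
     transversal avoiding Q, and the images of the lines then lie in the plane spanned
     by lam Q and the images of two points of the transversal. *)

Section AffineGeometry.
Variable A : affine_space.

Lemma meet_unique (l m : ln A) (p q : pt A) :
  l <> m -> inc p l -> inc p m -> inc q l -> inc q m -> p = q.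
Proof.
  intros Hlm Hpl Hpm Hql Hqm. apply NNPP; intro Hpq.
  exact (Hlm (ax_join_uniq A p q l m Hpq Hpl Hql Hpm Hqm)).
Qed.

Lemma par_eq (l m : ln A) (p : pt A) : par l m -> inc p l -> inc p m -> l = m.
Proof.
  intros Hlm Hpl Hpm. exact (ax_euclid_uniq A p m l m Hpl Hlm Hpm (ax_par_refl A m)).
Qed.

Lemma par_common (l m d : ln A) : par l d -> par m d -> par l m.
Proof. intros Hl Hm. exact (ax_par_trans A _ _ _ Hl (ax_par_sym A _ _ Hm)). Qed.

Lemma other_point (l : ln A) (p : pt A) : exists q, inc q l /\ q <> p.
Proof.
  destruct (ax_line_two A l) as [a [b [Hab [Ha Hb]]]].
  destruct (classic (a = p)) as [->|Hap]; eauto.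
Qed.

Lemma parallel_meets_side (a b c x : pt A) (lab lac lbc n : ln A) :
  noncollinear a b c -> inc a lab -> inc b lab -> inc a lac -> inc c lac ->
  inc b lbc -> inc c lbc -> inc x lab -> inc x n -> par n lbc ->
  exists p, inc p n /\ inc p lac.
Proof.
  intros Hnc Ha Hb Ha' Hc Hb' Hc' Hx Hxn Hn.
  destruct (classic (x = a)) as [->|Hxa]; [exists a; auto|].
  assert (Hax : a <> x) by congruence.
  destruct (ax_triangle A a b c a x lab lac lbc lab lac n Hnc Ha Hb Ha' Hc Hb' Hc'
              Hax Ha Hx (ax_par_refl A _) Ha' (ax_par_refl A _) Hxn Hn) as [p [Hp Hp']].
  exists p; auto.
Qed.

Lemma point_off_line (l : ln A) : exists q, ~ inc q l.
Proof.
  destruct (ax_three A) as [a [b [c Hnc]]].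
  destruct (classic (inc a l)); [|eauto]. destruct (classic (inc b l)); [|eauto].
  destruct (classic (inc c l)); [|eauto]. exfalso; apply Hnc; eauto.
Qed.

Lemma second_line (p : pt A) (l : ln A) : inc p l -> exists m, inc p m /\ m <> l.
Proof.
  intros Hp. destruct (point_off_line l) as [q Hq].
  assert (Hpq : p <> q) by (intro; subst; auto).
  destruct (ax_join A p q Hpq) as [m [Hpm Hqm]].
  exists m; split; auto. intro; subst; auto.
Qed.

(* The axioms allow a space without lines; once a line exists, every point is on one. *)
Lemma line_through_point : inhabited (ln A) -> forall r : pt A, exists l, inc r l.
Proof.
  intros [l] r. destruct (other_point l r) as [a [Ha Har]].
  assert (Hra : r <> a) by congruence.
  destruct (ax_join A r a Hra) as [m [Hrm _]]; eauto.
Qed.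

Lemma line_avoiding : inhabited (ln A) -> forall X : pt A, exists l, ~ inc X l.
Proof.
  intros Hl X. destruct (line_through_point Hl X) as [l HXl].
  destruct (point_off_line l) as [q Hq].
  destruct (ax_euclid A q l) as [m [Hqm Hml]]. exists m. intro HXm.
  assert (m = l) by (apply (par_eq m l X); auto). subst; auto.
Qed.

Lemma noncollinear_distinct (a b c : pt A) :
  inhabited (ln A) -> noncollinear a b c -> a <> b /\ a <> c /\ b <> c.
Proof.
  intros Hl Hnc.
  assert (Hpair : forall p q : pt A, exists l, inc p l /\ inc q l).
  { intros p q. destruct (classic (p = q)) as [<-|Hpq].
    - destruct (line_through_point Hl p) as [l Hp]; eauto.
    - destruct (ax_join A p q Hpq) as [l Hpql]; eauto. }
  repeat split; intro E; subst; apply Hnc.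
  - destruct (Hpair b c) as [l [? ?]]; eauto.
  - destruct (Hpair c b) as [l [? ?]]; eauto.
  - destruct (Hpair a c) as [l [? ?]]; eauto.
Qed.

Lemma span_subspace (X : pt A -> Prop) : subspace A (in_span A X).
Proof.
  split.
  - intros p q l Hpq Hp Hq Hpl Hql t Ht S HS HX.
    exact (proj1 HS p q l Hpq (Hp S HS HX) (Hq S HS HX) Hpl Hql t Ht).
  - intros l m p Hl Hp Hpm Hml t Ht S HS HX.
    exact (proj2 HS l m p (fun u Hu => Hl u Hu S HS HX) (Hp S HS HX) Hpm Hml t Ht).
Qed.

Lemma span_incl (X : pt A -> Prop) (p : pt A) : X p -> in_span A X p.
Proof. intros Hp S _ HX. auto. Qed.

Lemma span_triple (a b c : pt A) :
  in_span A (triple A a b c) a /\ in_span A (triple A a b c) b /\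
  in_span A (triple A a b c) c.
Proof. repeat split; apply span_incl; unfold triple; auto. Qed.

Lemma line_in_span (X : pt A -> Prop) (p q : pt A) (l : ln A) :
  p <> q -> in_span A X p -> in_span A X q -> inc p l -> inc q l ->
  line_in A (in_span A X) l.
Proof. exact (proj1 (span_subspace X) p q l). Qed.

Lemma parallel_in_span (X : pt A -> Prop) (l m : ln A) (p : pt A) :
  line_in A (in_span A X) l -> in_span A X p -> inc p m -> par m l ->
  line_in A (in_span A X) m.
Proof. exact (proj2 (span_subspace X) l m p). Qed.

Section SweptPlane.
Variables (x y z : pt A) (d l0 : ln A).
Hypotheses (Hxyz : noncollinear x y z) (Hxd : inc x d) (Hyd : inc y d)
  (Hxl0 : inc x l0) (Hzl0 : inc z l0).

Definition swept (w : pt A) : Prop :=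
  exists m r, inc w m /\ par m d /\ inc r m /\ inc r l0.

Lemma swept_transfer (w w' : pt A) (m : ln A) :
  swept w' -> inc w' m -> par m d -> inc w m -> swept w.
Proof.
  intros [m' [r [Hw' [Hm'd [Hr Hrl0]]]]] Hw'm Hmd Hwm.
  assert (m' = m) by (apply (ax_euclid_uniq A w' d); auto). subst m'.
  exists m, r; auto.
Qed.

Lemma swept_l0 (r : pt A) : inc r l0 -> swept r.
Proof. intros Hr. destruct (ax_euclid A r d) as [m [Hrm Hmd]]. exists m, r; auto. Qed.

Lemma l0_not_par_d : ~ par l0 d.
Proof.
  intro H. assert (l0 = d) by (apply (par_eq l0 d x); auto). subst.
  apply Hxyz. exists d; auto.
Qed.

Lemma swept_line_through_l0 (a c w : pt A) (g : ln A) :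
  inc a g -> inc a l0 -> inc c g -> c <> a -> swept c -> inc w g -> swept w.
Proof.
  intros Hag Hal0 Hcg Hca [mc [rc [Hcmc [Hmcd [Hrc Hrcl0]]]]] Hwg.
  assert (Hac : a <> c) by congruence.
  destruct (classic (g = l0)) as [->|Hgl0]; [apply swept_l0; auto|].
  destruct (classic (rc = a)) as [->|Hrca].
  - assert (mc = g) by (apply (ax_join_uniq A a c); auto). subst mc.
    exists g, a; auto.
  - destruct (ax_euclid A w d) as [mw [Hwmw Hmwd]].
    assert (Hnc : noncollinear a c rc).
    { intros [L [HaL [HcL HrcL]]]. apply Hgl0. transitivity L.
      - apply (ax_join_uniq A a c); auto.
      - apply (ax_join_uniq A a rc); auto. }
    destruct (parallel_meets_side a c rc w g l0 mc mw Hnc) as [p [Hpmw Hpl0]]; auto.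
    { apply (par_common _ _ d); auto. }
    exists mw, p; auto.
Qed.

Lemma swept_join (u v w : pt A) (g : ln A) :
  u <> v -> swept u -> swept v -> inc u g -> inc v g -> inc w g -> swept w.
Proof.
  intros Huv Hu Hv Hug Hvg Hwg.
  destruct (classic (exists a, inc a g /\ inc a l0)) as [[a [Hag Hal0]]|Hmiss].
  - destruct (classic (u = a)) as [->|Hua].
    + apply (swept_line_through_l0 a v w g); auto; congruence.
    + apply (swept_line_through_l0 a u w g); auto.
  - (* g misses l0: pass through the line k joining u to the foot r of v's parallel *)
    destruct Hv as [mv [r [Hvmv [Hmvd [Hrmv Hrl0]]]]].
    assert (Hur : u <> r) by (intro; subst; apply Hmiss; eauto).
    destruct (ax_join A u r Hur) as [k [Huk Hrk]].
    assert (Hnc : noncollinear u v r).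
    { intros [L [HuL [HvL HrL]]]. apply Hmiss. exists r. split; auto.
      assert (L = g) by (apply (ax_join_uniq A u v); auto). subst; auto. }
    destruct (ax_euclid A w d) as [mw [Hwmw Hmwd]].
    destruct (parallel_meets_side u v r w g k mv mw Hnc) as [w' [Hw'mw Hw'k]]; auto.
    { apply (par_common _ _ d); auto. }
    apply (swept_transfer w w' mw); auto.
    apply (swept_line_through_l0 r u w' k); auto.
Qed.

Lemma line_through_l0_meets_parallel (a c r : pt A) (g m : ln A) :
  inc a g -> inc a l0 -> inc c g -> c <> a -> swept c -> ~ par g d ->
  inc r l0 -> inc r m -> par m d -> exists p, inc p g /\ inc p m.
Proof.
  intros Hag Hal0 Hcg Hca [mc [rc [Hcmc [Hmcd [Hrc Hrcl0]]]]] Hgd Hrl0 Hrm Hmd.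
  destruct (classic (g = l0)) as [->|Hgl0]; [exists r; auto|].
  assert (Hrca : rc <> a).
  { intro; subst rc. apply Hgd.
    assert (mc = g) by (apply (ax_join_uniq A a c); auto; congruence). subst; auto. }
  assert (Hcrc : c <> rc) by (intro; subst rc; apply Hca; apply (meet_unique g l0); auto).
  assert (Hnc : noncollinear a rc c).
  { intros [L [HaL [HrcL HcL]]]. apply Hgl0. transitivity L.
    - apply (ax_join_uniq A a c); auto; congruence.
    - apply (ax_join_uniq A a rc); auto; congruence. }
  destruct (parallel_meets_side a rc c r l0 g mc m Hnc) as [p [Hpm Hpg]]; auto.
  { apply (par_common _ _ d); auto. }
  exists p; auto.
Qed.

Lemma swept_line_meets_parallel (g1 g2 r : pt A) (g m : ln A) :
  ~ par g d -> g1 <> g2 -> inc g1 g -> inc g2 g -> swept g1 -> swept g2 ->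
  inc r l0 -> inc r m -> par m d -> exists p, inc p g /\ inc p m.
Proof.
  intros Hgd H12 Hg1 Hg2 Hs1 Hs2 Hrl0 Hrm Hmd.
  destruct (classic (exists a, inc a g /\ inc a l0)) as [[a [Hag Hal0]]|Hmiss].
  - destruct (classic (g1 = a)) as [->|Hg1a].
    + apply (line_through_l0_meets_parallel a g2 r g m); auto; congruence.
    + apply (line_through_l0_meets_parallel a g1 r g m); auto.
  - (* g misses l0: first reach m along the line h joining the foot s1 of g1's
       parallel to g2, then come back to g along the parallel to d *)
    destruct Hs1 as [m1 [s1 [Hg1m1 [Hm1d [Hs1m1 Hs1l0]]]]].
    assert (Hs1g2 : s1 <> g2) by (intro; subst; apply Hmiss; eauto).
    destruct (ax_join A s1 g2 Hs1g2) as [h [Hs1h Hg2h]].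
    assert (Hhd : ~ par h d).
    { intro Hp. assert (h = m1) by (apply (ax_euclid_uniq A s1 d); auto). subst h.
      apply Hgd. assert (g = m1) by (apply (ax_join_uniq A g1 g2); auto). subst; auto. }
    destruct (line_through_l0_meets_parallel s1 g2 r h m) as [q [Hqh Hqm]]; auto.
    assert (Hnc : noncollinear g2 s1 g1).
    { intros [L [HL1 [HL2 HL3]]]. apply Hmiss. exists s1. split; auto.
      assert (L = g) by (apply (ax_join_uniq A g1 g2); auto). subst; auto. }
    destruct (parallel_meets_side g2 s1 g1 q h g m1 m Hnc) as [p [Hpm Hpg]]; auto.
    { apply (par_common _ _ d); auto. }
    exists p; auto.
Qed.

Lemma swept_par_closed (p t : pt A) (g m : ln A) :
  line_in A swept g -> swept p -> inc p m -> par m g -> inc t m -> swept t.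
Proof.
  intros Hg Hp Hpm Hmg Htm.
  destruct (ax_line_two A g) as [g1 [g2 [H12 [Hg1 Hg2]]]].
  pose proof Hp as [mp [rp [Hpmp [Hmpd [Hrpmp Hrpl0]]]]].
  destruct (classic (par g d)) as [Hgd|Hgd].
  - assert (m = mp).
    { apply (ax_euclid_uniq A p d); auto. apply (ax_par_trans A _ g); auto. }
    subst. apply (swept_transfer t p mp); auto.
  - destruct (classic (inc p g)) as [Hpg|Hpg].
    { assert (m = g) by (apply (par_eq m g p); auto). subst. apply Hg; auto. }
    destruct (classic (t = p)) as [->|Htp]; [auto|].
    (* e0 = g ∩ mp, and k joins p to another point e1 of g; in triangle e1 e0 p the
       parallels k through p and mt through t meet in a swept point of k *)
    destruct (swept_line_meets_parallel g1 g2 rp g mp) as [e0 [He0g He0mp]]; auto.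
    destruct (other_point g e0) as [e1 [He1g He1e0]].
    assert (He1p : e1 <> p) by (intro; subst; auto).
    destruct (ax_join A e1 p He1p) as [k [He1k Hpk]].
    destruct (ax_euclid A t d) as [mt [Htmt Hmtd]].
    assert (Hnc : noncollinear e1 e0 p).
    { intros [L [HL1 [HL2 HL3]]]. apply Hpg.
      assert (L = g) by (apply (ax_join_uniq A e1 e0); auto). subst; auto. }
    assert (Hpt : p <> t) by congruence.
    destruct (ax_triangle A e1 e0 p p t g k mp m k mt Hnc He1g He0g He1k Hpk He0mp Hpmp
      Hpt Hpm Htm Hmg Hpk (ax_par_refl A _) Htmt (par_common _ _ d Hmtd Hmpd))
      as [q [Hqk Hqmt]].
    apply (swept_transfer t q mt); auto.
    apply (swept_join e1 p q k); auto.
Qed.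

Lemma swept_subspace : subspace A swept.
Proof.
  split.
  - intros p q l Hpq Hp Hq Hpl Hql t Ht. apply (swept_join p q t l); auto.
  - intros l m p Hl Hp Hpm Hml t Ht. apply (swept_par_closed p t l m); auto.
Qed.

Lemma swept_generators : swept x /\ swept y /\ swept z.
Proof.
  repeat split; [apply swept_l0; auto | | apply swept_l0; auto].
  exists d, x; repeat split; auto using ax_par_refl.
Qed.

(* Two disjoint swept lines, neither parallel to d, are parallel: otherwise the
   parallel m to g through a point h1 of h is a third swept line, and a suitable
   parallel to d cuts m, h, g in points b, c, e with e producing a common point of g, h. *)
Lemma swept_disjoint_par_transversal (g h : ln A) :
  line_in A swept g -> line_in A swept h -> ~ par g d -> ~ par h d ->
  ~ (exists p, inc p g /\ inc p h) -> par g h.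
Proof.
  intros Hg Hh Hgd Hhd Hdis.
  destruct (ax_line_two A g) as [g1 [g2 [Hg12 [Hg1 Hg2]]]].
  destruct (ax_line_two A h) as [h1 [h2 [Hh12 [Hh1 Hh2]]]].
  destruct (ax_euclid A h1 g) as [m [Hh1m Hmg]].
  destruct (classic (m = h)) as [<-|Hmh]; [apply ax_par_sym; auto|]. exfalso.
  assert (Hm : line_in A swept m) by (intros t Ht; apply (swept_par_closed h1 t g m); auto).
  destruct (Hh h1 Hh1) as [mp [rp [Hh1mp [Hmpd _]]]].
  assert (Hr : exists r, inc r l0 /\ ~ inc r mp).
  { destruct (ax_line_two A l0) as [q1 [q2 [Hq12 [Hq1 Hq2]]]].
    destruct (classic (inc q1 mp)) as [Hq1mp|]; [|eauto].
    destruct (classic (inc q2 mp)) as [Hq2mp|]; [|eauto].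
    exfalso. apply l0_not_par_d.
    assert (l0 = mp) by (apply (ax_join_uniq A q1 q2); auto). subst; auto. }
  destruct Hr as [r [Hrl0 Hrmp]].
  destruct (ax_euclid A r d) as [mr [Hrmr Hmrd]].
  assert (Hh1mr : ~ inc h1 mr).
  { intro. assert (mr = mp) by (apply (ax_euclid_uniq A h1 d); auto). subst; auto. }
  assert (Hmd : ~ par m d) by (intro; apply Hgd; apply (ax_par_trans A _ m); auto using ax_par_sym).
  destruct (ax_line_two A m) as [m1 [m2 [Hm12 [Hm1 Hm2]]]].
  destruct (swept_line_meets_parallel m1 m2 r m mr) as [b [Hbm Hbmr]]; auto.
  destruct (swept_line_meets_parallel h1 h2 r h mr) as [c [Hch Hcmr]]; auto.
  destruct (swept_line_meets_parallel g1 g2 r g mr) as [e [Heg Hemr]]; auto.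
  assert (Hbc : b <> c).
  { intro; subst c. apply Hmh. apply (ax_join_uniq A h1 b); auto. intro; subst; auto. }
  assert (Hnc : noncollinear c b h1).
  { intros [L [HL1 [HL2 HL3]]]. apply Hh1mr.
    assert (L = mr) by (apply (ax_join_uniq A c b); auto). subst; auto. }
  destruct (parallel_meets_side c b h1 e mr h m g Hnc) as [p [Hpg Hph]]; auto.
  { apply ax_par_sym; auto. }
  apply Hdis; eauto.
Qed.

Lemma swept_disjoint_par (g h : ln A) :
  line_in A swept g -> line_in A swept h -> ~ (exists p, inc p g /\ inc p h) -> par g h.
Proof.
  intros Hg Hh Hdis.
  assert (Hd_meets : forall g' h', line_in A swept g' -> line_in A swept h' ->
            par g' d -> ~ par h' d -> exists p, inc p h' /\ inc p g').
  { intros g' h' Hg' Hh' Hg'd Hh'd.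
    destruct (ax_line_two A g') as [p [_ [_ [Hp _]]]].
    destruct (ax_line_two A h') as [q1 [q2 [Hq12 [Hq1 Hq2]]]].
    destruct (Hg' p Hp) as [mp [r [Hpmp [Hmpd [Hrmp Hrl0]]]]].
    assert (g' = mp) by (apply (ax_euclid_uniq A p d); auto). subst mp.
    apply (swept_line_meets_parallel q1 q2 r h' g'); auto. }
  destruct (classic (par g d)) as [Hgd|Hgd]; destruct (classic (par h d)) as [Hhd|Hhd].
  - apply (par_common _ _ d); auto.
  - exfalso. destruct (Hd_meets g h) as [p [Hph Hpg]]; eauto.
  - exfalso. destruct (Hd_meets h g) as [p [Hpg Hph]]; eauto.
  - apply swept_disjoint_par_transversal; auto.
Qed.

End SweptPlane.

Lemma plane_disjoint_par (a b c : pt A) (g h : ln A) : noncollinear a b c ->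
  line_in A (in_span A (triple A a b c)) g -> line_in A (in_span A (triple A a b c)) h ->
  ~ (exists p, inc p g /\ inc p h) -> par g h.
Proof.
  intros Hnc Hg Hh Hdis.
  destruct (noncollinear_distinct a b c (inhabits g) Hnc) as [Hab [Hac _]].
  destruct (ax_join A a b Hab) as [d [Had Hbd]].
  destruct (ax_join A a c Hac) as [l0 [Hal0 Hcl0]].
  assert (Hsub : forall p, in_span A (triple A a b c) p -> swept d l0 p).
  { intros p Hp. apply Hp; [apply swept_subspace; auto|].
    destruct (swept_generators a b c d l0) as [Hsa [Hsb Hsc]]; auto.
    intros u [-> | [-> | ->]]; auto. }
  apply (swept_disjoint_par a b c d l0); auto; intros t Ht; apply Hsub; auto.
Qed.

Lemma pencil_pair_coplanar (Q : pt A) (u v : ln A) : inc Q u -> inc Q v ->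
  exists E, plane A E /\ E Q /\ line_in A E u /\ line_in A E v.
Proof.
  intros HQu HQv.
  destruct (other_point u Q) as [U [HUu HUQ]].
  assert (HV : exists V, V <> Q /\ ~ inc V u /\ (v = u \/ inc V v)).
  { destruct (classic (v = u)) as [->|Hvu].
    - destruct (point_off_line u) as [V HV]. exists V. split; [intro; subst; auto|auto].
    - destruct (other_point v Q) as [V [HVv HVQ]]. exists V. repeat split; auto.
      intro HVu. apply HVQ. apply (meet_unique v u); auto. }
  destruct HV as [V [HVQ [HVu Hv]]].
  assert (Hnc : noncollinear Q U V).
  { intros [L [HQL [HUL HVL]]]. apply HVu.
    assert (L = u) by (apply (ax_join_uniq A Q U); auto; congruence). subst; auto. }
  destruct (span_triple Q U V) as [SQ [SU SV]].
  exists (in_span A (triple A Q U V)). repeat split; auto.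
  - exists Q, U, V. split; auto. intro; tauto.
  - apply (line_in_span _ Q U); auto; congruence.
  - destruct Hv as [->|HVv]; [apply (line_in_span _ Q U); auto; congruence|].
    apply (line_in_span _ Q V); auto; congruence.
Qed.

Lemma collinear_at_degenerate (Q : pt A) (a b c : ln A) :
  inc Q a -> inc Q b -> inc Q c -> a = b \/ a = c \/ b = c -> collinear_at Q a b c.
Proof.
  intros Ha Hb Hc [<-|[<-|<-]].
  - destruct (pencil_pair_coplanar Q a c) as [E HE]; auto. exists E; tauto.
  - destruct (pencil_pair_coplanar Q a b) as [E HE]; auto. exists E; tauto.
  - destruct (pencil_pair_coplanar Q a b) as [E HE]; auto. exists E; tauto.
Qed.

Definition three_points (l : ln A) : Prop :=
  exists p q r, inc p l /\ inc q l /\ inc r l /\ p <> q /\ p <> r /\ q <> r.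

Lemma points_besides (l : ln A) (O : pt A) : three_points l ->
  exists p r, inc p l /\ inc r l /\ p <> O /\ r <> O /\ p <> r.
Proof.
  intros [p1 [p2 [p3 [H1 [H2 [H3 [N12 [N13 N23]]]]]]]].
  destruct (classic (p1 = O)) as [->|E1]; [exists p2, p3; auto|].
  destruct (classic (p2 = O)) as [->|E2]; [exists p1, p3; auto|].
  exists p1, p2; auto.
Qed.

(* Three points pass from a line l to any line m meeting it: project l from a point s
   of m parallel to the join of s with a point p of l. *)
Lemma three_points_through (l m : ln A) (O : pt A) :
  l <> m -> inc O l -> inc O m -> three_points l -> three_points m.
Proof.
  intros Hlm HOl HOm H3.
  destruct (points_besides l O H3) as [p [r [Hp [Hr [HpO [HrO Hpr]]]]]].
  destruct (other_point m O) as [s [Hs HsO]].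
  assert (Hsl : ~ inc s l) by (intro; apply HsO; apply (meet_unique m l); auto; congruence).
  assert (Hps : p <> s) by (intro; subst; auto).
  destruct (ax_join A p s Hps) as [k [Hpk Hsk]].
  destruct (ax_euclid A r k) as [n [Hrn Hnk]].
  assert (Hnc : noncollinear O p s).
  { intros [L [HOL [HpL HsL]]]. apply Hsl.
    assert (L = l) by (apply (ax_join_uniq A O p); auto; congruence). subst; auto. }
  destruct (parallel_meets_side O p s r l m k n Hnc) as [t [Htn Htm]]; auto.
  assert (HtO : t <> O).
  { intro; subst t. assert (n = l) by (apply (ax_join_uniq A O r); auto; congruence). subst n.
    assert (l = k) by (apply (par_eq l k p); auto). subst; auto. }
  assert (Hts : t <> s).
  { intro; subst t. assert (n = k) by (apply (par_eq n k s); auto). subst n.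
    assert (k = l) by (apply (ax_join_uniq A p r); auto). subst; auto. }
  exists O, s, t; repeat split; auto; congruence.
Qed.

Lemma three_points_everywhere : ~ order_two A -> forall l, three_points l.
Proof.
  intros Hord b.
  assert (H3 : exists l, three_points l).
  { apply NNPP; intro Hn. apply Hord. intro l.
    destruct (ax_line_two A l) as [p [q [Hpq [Hp Hq]]]].
    exists p, q; repeat split; auto. intros r Hr.
    apply NNPP; intro Hr'. apply Hn. exists l, p, q, r. repeat split; auto; intro; subst; tauto. }
  destruct H3 as [l Hl].
  destruct (classic (l = b)) as [<-|Hlb]; auto.
  destruct (classic (exists O, inc O l /\ inc O b)) as [[O [HOl HOb]]|Hno].
  - apply (three_points_through l b O); auto.
  - (* pass through a line k joining l to b *)
    destruct (ax_line_two A l) as [p [_ [_ [Hp _]]]].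
    destruct (ax_line_two A b) as [r [_ [_ [Hr _]]]].
    assert (Hpr : p <> r) by (intro; subst; eauto).
    destruct (ax_join A p r Hpr) as [k [Hpk Hrk]].
    apply (three_points_through k b r); auto; [intro; subst; eauto|].
    apply (three_points_through l k p); auto. intro; subst; eauto.
Qed.

Lemma pencil_transversal (Q : pt A) (a b c : ln A) (E : pt A -> Prop) :
  plane A E -> line_in A E a -> line_in A E b -> line_in A E c ->
  inc Q a -> inc Q b -> inc Q c -> a <> b -> three_points b ->
  exists P R S dl, inc P a /\ inc R b /\ inc S c /\ P <> Q /\ R <> Q /\ S <> Q /\
    inc P dl /\ inc R dl /\ inc S dl.
Proof.
  intros [x [y [z [Hxyz HE]]]] HaE HbE HcE HQa HQb HQc Hab Hb3.
  destruct (other_point a Q) as [P [HPa HPQ]].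
  destruct (points_besides b Q Hb3) as [R1 [R2 [HR1 [HR2 [HR1Q [HR2Q HR12]]]]]].
  assert (HPb : ~ inc P b) by (intro; apply HPQ; apply (meet_unique a b); auto).
  assert (HPR1 : P <> R1) by (intro; subst; auto).
  assert (HPR2 : P <> R2) by (intro; subst; auto).
  destruct (ax_join A P R1 HPR1) as [d1 [HPd1 HR1d1]].
  destruct (ax_join A P R2 HPR2) as [d2 [HPd2 HR2d2]].
  assert (HRd : exists R dl, inc R b /\ R <> Q /\ P <> R /\ inc P dl /\ inc R dl /\ ~ par dl c).
  { destruct (classic (par d1 c)) as [H1|H1]; [|exists R1, d1; repeat split; auto].
    destruct (classic (par d2 c)) as [H2|H2]; [|exists R2, d2; repeat split; auto].
    exfalso. assert (d1 = d2) by (apply (ax_euclid_uniq A P c); auto). subst d2.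
    assert (d1 = b) by (apply (ax_join_uniq A R1 R2); auto). subst; auto. }
  destruct HRd as [R [dl [HRb [HRQ [HPR [HPdl [HRdl Hdlc]]]]]]].
  assert (Hspan : forall l, line_in A E l -> line_in A (in_span A (triple A x y z)) l).
  { intros l Hl t Ht. apply HE; auto. }
  assert (Hdl : line_in A (in_span A (triple A x y z)) dl).
  { apply (line_in_span _ P R); auto; apply HE; auto. }
  assert (HS : exists S, inc S dl /\ inc S c).
  { apply NNPP; intro H. apply Hdlc. apply (plane_disjoint_par x y z); auto. }
  destruct HS as [S [HSdl HSc]].
  assert (HSQ : S <> Q).
  { intro; subst S. assert (dl = a) by (apply (ax_join_uniq A P Q); auto). subst.
    apply HRQ. apply (meet_unique a b); auto. }
  exists P, R, S, dl; repeat split; auto.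
Qed.

Lemma parallel_disjoint (l m : ln A) : par l m -> l <> m -> ~ related l m.
Proof. intros Hlm Hne [p [Hpl Hpm]]. exact (Hne (par_eq l m p Hlm Hpl Hpm)). Qed.

Lemma dim_ge3_has_line : dim_ge3 A -> inhabited (ln A).
Proof.
  intros [a [b [c [d [_ Hd]]]]].
  assert (Hda : d <> a) by (intro; subst; apply Hd, span_triple).
  destruct (ax_join A d a Hda) as [l _]. exact (inhabits l).
Qed.

(* In dimension at least 3 there are parallel lines l1, l2, l3 with no common
   transversal: l1 and l2 span a plane, and l3 is a parallel off that plane. *)
Lemma dim_ge3_skew_parallels : dim_ge3 A ->
  exists l1 l2 l3 : ln A, ~ related l1 l2 /\ ~ related l1 l3 /\
    ~ (exists g, related g l1 /\ related g l2 /\ related g l3).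
Proof.
  intros Hdim. pose proof (dim_ge3_has_line Hdim) as Hline.
  destruct Hdim as [a [b [c [d [Hnc Hd]]]]].
  destruct (span_triple a b c) as [Sa [Sb Sc]].
  set (E := in_span A (triple A a b c)) in *.
  destruct (noncollinear_distinct a b c Hline Hnc) as [Hab _].
  destruct (ax_join A a b Hab) as [l1 [Hal1 Hbl1]].
  destruct (ax_euclid A c l1) as [l2 [Hcl2 Hl2]].
  destruct (ax_euclid A d l1) as [l3 [Hdl3 Hl3]].
  assert (HE1 : line_in A E l1) by (apply (line_in_span _ a b); auto).
  assert (HE2 : line_in A E l2) by (apply (parallel_in_span _ l1 l2 c); auto).
  assert (H12 : ~ related l1 l2).
  { apply parallel_disjoint; [apply ax_par_sym; auto|].
    intros <-. apply Hnc. exists l1; auto. }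
  assert (H13 : ~ related l1 l3).
  { apply parallel_disjoint; [apply ax_par_sym; auto|]. intros <-. apply Hd, HE1; auto. }
  exists l1, l2, l3. repeat split; auto.
  intros [g [[q1 [Hq1g Hq1l1]] [[q2 [Hq2g Hq2l2]] [q3 [Hq3g Hq3l3]]]]].
  assert (Hq12 : q1 <> q2) by (intros <-; apply H12; exists q1; auto).
  assert (HEg : line_in A E g) by (apply (line_in_span _ q1 q2); auto; [apply HE1 | apply HE2]; auto).
  exact (Hd (parallel_in_span _ l1 l3 q3 HE1 (HEg q3 Hq3g) Hq3l3 Hl3 d Hdl3)).
Qed.

(* If A is a plane, a line u1 disjoint from u2 and u3 has a common transversal with
   them: disjoint lines are parallel, so any other line through a point of u1 meets
   both u2 and u3. *)
Lemma planar_transversal (x y z : pt A) (u1 u2 u3 : ln A) :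
  noncollinear x y z -> (forall w, in_span A (triple A x y z) w) ->
  ~ related u1 u2 -> ~ related u1 u3 ->
  exists g, related g u1 /\ related g u2 /\ related g u3.
Proof.
  intros Hnc Hplanar H12 H13.
  destruct (ax_line_two A u1) as [p [_ [_ [Hp _]]]].
  destruct (second_line p u1 Hp) as [g [Hpg Hgu1]].
  assert (Hmeets : forall u, ~ related u1 u -> related g u).
  { intros u Hu. apply NNPP; intro Hgu. apply Hgu1. apply (par_eq g u1 p); auto.
    apply (par_common _ _ u); apply (plane_disjoint_par x y z); auto; intros t _; auto. }
  exists g. split; [exists p; auto | split; apply Hmeets; auto].
Qed.

End AffineGeometry.

Section LineCorrespondence.
Variables (A A' : affine_space) (phi : ln A -> ln A') (lam : pt A -> pt A').
Hypotheses
  (hinj : forall a b, phi a = phi b -> a = b)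
  (hsurj : forall b', exists a, phi a = b')
  (hrel : forall a b, related a b -> related (phi a) (phi b))
  (hlam : forall a b p, adjacent a b -> inc p a -> inc p b ->
            inc (lam p) (phi a) /\ inc (lam p) (phi b))
  (* A' has a line; this excludes a constant lam *)
  (hline' : inhabited (ln A')).

(* If A were a plane, the preimages of three parallel lines of A' without common
   transversal would have one, and its image would be a transversal in A'. *)
Lemma dim_ge3_reflected : dim_ge3 A' -> dim_ge3 A.
Proof.
  intros Hdim'. apply NNPP; intro Hdim.
  destruct (dim_ge3_skew_parallels A' Hdim') as [l1 [l2 [l3 [H12 [H13 Hno]]]]].
  destruct (hsurj l1) as [u1 <-]. destruct (hsurj l2) as [u2 <-].
  destruct (hsurj l3) as [u3 <-].
  destruct (ax_three A) as [x [y [z Hxyz]]].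
  (* u1 misses u2 and u3, as phi preserves meeting lines *)
  destruct (planar_transversal A x y z u1 u2 u3) as [g [Hg1 [Hg2 Hg3]]]; auto.
  - intro w. apply NNPP; intro Hw. apply Hdim. exists x, y, z, w; auto.
  - apply Hno. exists (phi g); auto.
Qed.

Lemma lam_on_line (p : pt A) (l : ln A) : inc p l -> inc (lam p) (phi l).
Proof.
  intros Hp. destruct (second_line A p l Hp) as [m [Hpm Hml]].
  apply (hlam l m p); auto. split; [exists p; auto | congruence].
Qed.

Lemma phi_lines_eq (u v : pt A') (a b : ln A) : u <> v ->
  inc u (phi a) -> inc v (phi a) -> inc u (phi b) -> inc v (phi b) -> a = b.
Proof. intros Huv Hua Hva Hub Hvb. apply hinj, (ax_join_uniq A' u v); auto. Qed.

(* If lam identified two distinct points p, q it would be constant: a point s off the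
   line pq is sent to lam p by the two lines sp, sq; a point t of pq then by the line
   ts and the line pq. *)
Lemma lam_constant_of_collision (p q : pt A) :
  p <> q -> lam p = lam q -> forall t, lam t = lam p.
Proof.
  intros Hpq Epq. destruct (ax_join A p q Hpq) as [a [Hpa Hqa]].
  assert (Hoff : forall s, ~ inc s a -> lam s = lam p).
  { intros s Hs. assert (Hps : p <> s) by (intro; subst; auto).
    assert (Hqs : q <> s) by (intro; subst; auto).
    destruct (ax_join A p s Hps) as [ps [Hpps Hsps]].
    destruct (ax_join A q s Hqs) as [qs [Hqqs Hsqs]].
    apply NNPP; intro Hne.
    assert (ps = qs).
    { apply (phi_lines_eq (lam s) (lam p)); auto using lam_on_line.
      rewrite Epq; auto using lam_on_line. }
    subst qs. apply Hs. rewrite (ax_join_uniq A p q a ps); auto. }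
  intros t. destruct (classic (inc t a)) as [Hta|Hta]; [|auto].
  destruct (point_off_line A a) as [s Hs].
  assert (Hst : s <> t) by (intro; subst; auto).
  destruct (ax_join A s t Hst) as [st [Hsst Htst]].
  apply NNPP; intro Hne. apply Hs.
  assert (st = a).
  { apply (phi_lines_eq (lam t) (lam p)); auto using lam_on_line.
    rewrite <- (Hoff s Hs); auto using lam_on_line. }
  subst; auto.
Qed.

(* Hence lam is injective, as some line of A' avoids any given point. *)
Lemma lam_injective (p q : pt A) : lam p = lam q -> p = q.
Proof.
  intros Epq. apply NNPP; intro Hpq.
  destruct (line_avoiding A' hline' (lam p)) as [l' Hl'].
  destruct (hsurj l') as [l <-].
  destruct (ax_line_two A l) as [t [_ [_ [Ht _]]]].
  apply Hl'. rewrite <- (lam_constant_of_collision p q Hpq Epq t). apply lam_on_line; auto.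
Qed.

Lemma phi_onto_pencil (Q : pt A) (l' : ln A') :
  inc (lam Q) l' -> exists l, inc Q l /\ phi l = l'.
Proof.
  intros HQ. destruct (hsurj l') as [a <-]. exists a; split; auto.
  apply NNPP; intro HQa.
  destruct (ax_line_two A a) as [P [_ [_ [HPa _]]]].
  assert (HQP : Q <> P) by (intro; subst; auto).
  destruct (ax_join A Q P HQP) as [b [HQb HPb]].
  assert (a = b).
  { apply (phi_lines_eq (lam P) (lam Q)); auto using lam_on_line.
    intro E; apply HQP; symmetry; apply lam_injective; auto. }
  subst; auto.
Qed.

Lemma transversal_image_collinear (Q P R S : pt A) (a b c dl : ln A) :
  a <> b -> inc Q a -> inc Q b -> inc Q c -> inc P a -> inc R b -> inc S c ->
  P <> Q -> R <> Q -> S <> Q -> inc P dl -> inc R dl -> inc S dl ->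
  collinear_at (lam Q) (phi a) (phi b) (phi c).
Proof.
  intros Hab HQa HQb HQc HPa HRb HSc HPQ HRQ HSQ HPd HRd HSd.
  assert (Hlam : forall u v, u <> v -> lam u <> lam v)
    by (intros u v Huv E; apply Huv, lam_injective, E).
  assert (HPR : P <> R) by (intros <-; apply HPQ, (meet_unique A a b); auto).
  assert (Hnc : noncollinear (lam Q) (lam P) (lam R)).
  { intros [L [HQL [HPL HRL]]]. apply Hab, hinj. transitivity L.
    - apply (ax_join_uniq A' (lam Q) (lam P)); auto using lam_on_line.
    - apply (ax_join_uniq A' (lam Q) (lam R)); auto using lam_on_line. }
  destruct (span_triple A' (lam Q) (lam P) (lam R)) as [SQ [SP SR]].
  set (E' := in_span A' (triple A' (lam Q) (lam P) (lam R))) in *.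
  assert (Hd : line_in A' E' (phi dl))
    by (apply (line_in_span A' _ (lam P) (lam R)); auto using lam_on_line).
  exists E'. repeat split; auto.
  - exists (lam Q), (lam P), (lam R). split; auto. intro; tauto.
  - apply (line_in_span A' _ (lam Q) (lam P)); auto using lam_on_line.
  - apply (line_in_span A' _ (lam Q) (lam R)); auto using lam_on_line.
  - apply (line_in_span A' _ (lam Q) (lam S)); auto using lam_on_line.
    apply Hd, lam_on_line; auto.
Qed.

Lemma phi_preserves_collinear_at (Q : pt A) (a b c : ln A) :
  ~ order_two A -> inc Q a -> inc Q b -> inc Q c ->
  collinear_at Q a b c -> collinear_at (lam Q) (phi a) (phi b) (phi c).
Proof.
  intros Hord HQa HQb HQc [E [HE [_ [HaE [HbE HcE]]]]].
  destruct (classic (a = b \/ a = c \/ b = c)) as [Hdeg|Hdeg].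
  - apply collinear_at_degenerate; auto using lam_on_line.
    destruct Hdeg as [E1|[E1|E1]]; [left|right; left|right; right]; congruence.
  - destruct (pencil_transversal A Q a b c E)
      as [P [R [S [dl [HPa [HRb [HSc [HPQ [HRQ [HSQ [HPd [HRd HSd]]]]]]]]]]]]; auto.
    + apply three_points_everywhere; auto.
    + apply (transversal_image_collinear Q P R S a b c dl); auto.
Qed.

Lemma phi_semicollineation (Q : pt A) :
  ~ order_two A -> semicollineation_at A A' phi Q (lam Q).
Proof.
  intros Hord. repeat split.
  - intros l Hl; apply lam_on_line; auto.
  - intros l m _ _; apply hinj.
  - intros l' Hl'; apply phi_onto_pencil; auto.
  - intros a b c Ha Hb Hc; apply phi_preserves_collinear_at; auto.
Qed.

End LineCorrespondence.

Theorem theorem3 (A A' : affine_space) (phi : ln A -> ln A') (lam : pt A -> pt A')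
  (hdim' : dim_ge3 A')
  (hinj : forall a b, phi a = phi b -> a = b)
  (hsurj : forall b', exists a, phi a = b')
  (hrel : forall a b, related a b -> related (phi a) (phi b))
  (hlam : forall a b p, adjacent a b -> inc p a -> inc p b ->
            inc (lam p) (phi a) /\ inc (lam p) (phi b)) :
  dim_ge3 A /\
  (~ order_two A ->
     forall Q : pt A, semicollineation_at A A' phi Q (lam Q)).
Proof.
  pose proof (dim_ge3_has_line A' hdim') as hline'.
  split.
  - exact (dim_ge3_reflected A A' phi hsurj hrel hdim').
  - intros Hord Q. exact (phi_semicollineation A A' phi lam hinj hsurj hlam hline' Q Hord).
Qed.
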